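(* Fix $m\ge 2$. Assume that for all $(s,k)$ an $m$-odd-even merger $\mathrm{oe\_merge}^s_k$ of order $k$ on $s$ inputs is given. Define recursively, for $1\le k\le n$, the comparator network $\mathrm{oe\_sel}^n_k$ on input $\bar x\in X^n$ as follows. If $k=1$: output $\max^n(\bar x)$. If $k\ge 2$: choose integers $n_1\ge\dots\ge n_m\ge 0$ with $\sum_i n_i=n$ and $n_1<n$. Split $\bar x$ into consecutive blocks $\bar x^1,\dots,\bar x^m$ of lengths $n_1,\dots,n_m$. For each $i$ let $k_i=\min(k,n_i)$ and $\bar y^i=\mathrm{oe\_sel}^{n_i}_{k_i}(\bar x^i)$ (with $\bar y^i=\bar x^i$ if $k_i=0$). Let $s=\sum_ik_i$ and $\overline{out}=\mathrm{suff}(k_1+1,\bar y^1)::\dots::\mathrm{suff}(k_m+1,\bar y^m)$. Output $\mathrm{oe\_merge}^s_k(\langle \mathrm{pref}(k_1,\bar y^1),\dots,\mathrm{pref}(k_m,\bar y^m)\rangle)::\overline{out}$. Then for every choice of the splittings, $\mathrm{oe\_sel}^n_k$ is a $k$-selection network, i.e. for every $\bar x\in X^n$ the output is top $k$ sorted.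
   Context: $X$ is a totally ordered set. A sequence is sorted if it is non-increasing. $::$ is concatenation; $\mathrm{pref}(i,\bar x)=\langle x_1,\dots,x_i\rangle$, $\mathrm{suff}(i,\bar x)=\langle x_i,\dots,x_n\rangle$ (empty if $i>n$). A comparator network is a map on sequences obtained by composing sorters (which rearrange the values at chosen positions into non-increasing order) and fixed rearrangements of positions; it permutes its input. $\max^n$ is a comparator network on $n$ inputs whose first output is the maximum of the inputs. A sequence $\bar x\in X^n$ is top $k$ sorted ($k\le n$) if $\langle x_1,\dots,x_k\rangle$ is sorted and $x_i\ge x_j$ for all $i\le k<j$; by convention a sequence of length at most $k$ is top $k$ sorted iff it is sorted. A $k$-selection network on $n$ inputs is a comparator network whose output is top $k$ sorted for every input. An $m$-odd-even merger of order $k$ on $s$ inputs is a comparator network $f$ such that for every tuple $\langle\bar x^1,\dots,\bar x^m\rangle$ in which each $\bar x^i$ is top $k$ sorted and $\sum_i|\bar x^i|=s$, $f(\bar x^1::\dots::\bar x^m)$ is top $k$ sorted. *)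

From mathcomp Require Import all_boot all_order.
Set Implicit Arguments. Unset Strict Implicit. Unset Printing Implicit Defensive.
Import Order.TTheory.
Local Open Scope order_scope.

(* Syntax of comparator networks: a finite composition of sorters and
   fixed rearrangements of positions (positions are 0-based). *)
Inductive cnet : Type :=
| CId : cnet
| CSort : seq nat -> cnet -> cnet   (* CSort I c : first apply c, then sort positions I *)
| CPerm : seq nat -> cnet -> cnet.  (* CPerm p c : first apply c, then output j := input (p j) *)

Fixpoint cnet_on (n : nat) (c : cnet) : bool :=
  match c with
  | CId => true
  | CSort J c' => [&& uniq J, all (fun i => (i < n)%N) J & cnet_on n c']
  | CPerm p c' => perm_eq p (iota 0 n) && cnet_on n c'
  end.

Section Eval.
Context {d : Order.disp_t} {X : orderType d}.

(* "sorted" = non-increasing *)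
Definition nonincr (x : seq X) : bool := sorted (>=%O) x.

(* sorter on positions I: the values at positions I (listed in the order of I)
   are rearranged into non-increasing order *)
Definition sorter (J : seq nat) (x : seq X) : seq X :=
  let ix := zip (iota 0 (size x)) x in
  let vals := sort (>=%O) [seq p.2 | p <- ix & p.1 \in J] in
  [seq (if p.1 \in J then nth p.2 vals (index p.1 J) else p.2) | p <- ix].

Definition rearr (p : seq nat) (x : seq X) : seq X := pmap (onth x) p.

Fixpoint ceval (c : cnet) (x : seq X) : seq X :=
  match c with
  | CId => x
  | CSort J c' => sorter J (ceval c' x)
  | CPerm p c' => rearr p (ceval c' x)
  end.

Definition top_sorted (k : nat) (x : seq X) : bool :=
  if (size x <= k)%N then nonincr x
  else nonincr (take k x) && all (fun a => all (fun b => b <= a) (drop k x)) (take k x).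

(* The recursive odd-even selection network oe_sel^n_k, parameterised by
   the max networks [maxnet n] (= max^n), the mergers [merger s k]
   (= oe_merge^s_k) and the splitting choice [split n k] = [n_1;...;n_m].
   [fuel] bounds the recursion depth; oe_sel uses fuel n.+1, which suffices
   since the block sizes strictly decrease (n_i <= n_1 < n). *)
Fixpoint oe_sel_rec (maxnet : nat -> cnet) (merger : nat -> nat -> cnet)
    (split : nat -> nat -> seq nat) (fuel n k : nat) (x : seq X) : seq X :=
  match fuel with
  | 0 => x
  | fuel'.+1 =>
    if (k <= 1)%N then ceval (maxnet n) x else
    let ns := split n k in
    let blocks := reshape ns x in
    let ks := [seq minn k ni | ni <- ns] in
    let ys := [seq (if minn k p.1 == 0%N then p.2
                    else oe_sel_rec maxnet merger split fuel' p.1 (minn k p.1) p.2)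
              | p <- zip ns blocks] in
    let s := sumn ks in
    ceval (merger s k) (flatten [seq take p.1 p.2 | p <- zip ks ys])
      ++ flatten [seq drop p.1 p.2 | p <- zip ks ys]
  end.

Definition oe_sel maxnet merger split (n k : nat) (x : seq X) : seq X :=
  oe_sel_rec maxnet merger split n.+1 n k x.

End Eval.

From mathcomp Require Import all_boot all_order.
From mathcomp Require Import zify.
Set Implicit Arguments. Unset Strict Implicit. Unset Printing Implicit Defensive.
Import Order.TTheory.
Local Open Scope order_scope.

(* Comparator networks permute their inputs, so by induction every block y^i
   is a rearrangement of x^i that is top-k_i sorted, k_i = min(k, n_i).  The
   merger is then fed top-k sorted pieces, and its output M is top-k sorted.
   An entry b that bypasses the merger lies beyond the prefix of a block with
   k_i = k < n_i, so the k entries of that prefix, all of which occur in M, are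
   >= b.  If b exceeded one of the first k entries a of M, then only the other
   k - 1 of them could be >= b, since everything after position k in M is <= a:
   a contradiction. *)

Lemma leq_count_flatten (T : eqType) (a : pred T) (s : seq T) ss :
  s \in ss -> (count a s <= count a (flatten ss))%N.
Proof.
elim: ss => //= t ss IH; rewrite inE count_cat => /orP[/eqP -> | /IH]; lia.
Qed.

Lemma zip_reshape_size (T : eqType) sh (x : seq T) : sumn sh = size x ->
  forall q, q \in zip sh (reshape sh x) -> size q.2 = q.1.
Proof.
elim: sh x => //= a sh IH x hs q; rewrite inE => /orP[/eqP -> /=|].
  by rewrite size_takel //; lia.
by apply: IH; rewrite size_drop; lia.
Qed.

Lemma leq_head_sorted s t : sorted geq s -> t \in s -> (t <= head 0 s)%N.
Proof.
case: s => //= a s hs; rewrite inE => /orP[/eqP -> //|ts].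
by have /allP := order_path_min (fun _ _ _ h1 h2 => leq_trans h2 h1) hs; apply.
Qed.

Lemma leq_minn_sumn k ns : (minn k (sumn ns) <= sumn (map (minn k) ns))%N.
Proof. by elim: ns => [|a ns IH] /=; lia. Qed.

Lemma size_flatten_take (T : eqType) (P : seq (nat * seq T)) :
  {in P, forall p, p.1 <= size p.2}%N ->
  size (flatten [seq take p.1 p.2 | p <- P]) = sumn (map fst P).
Proof.
elim: P => //= p P IH hP; rewrite size_cat size_takel ?hP ?mem_head // IH //.
by move=> q qP; apply: hP; rewrite inE qP orbT.
Qed.

Lemma size_flatten_take_drop (T : Type) (P : seq (nat * seq T)) :
  (size (flatten [seq take p.1 p.2 | p <- P]) + size (flatten [seq drop p.1 p.2 | p <- P]) =
  sumn [seq size p.2 | p <- P])%N.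
Proof.
elim: P => //= p P IH; rewrite !size_cat -IH.
have := congr1 size (cat_take_drop p.1 p.2); rewrite size_cat; lia.
Qed.

Lemma zip_iota_nth (T : Type) (x0 : T) (x : seq T) :
  zip (iota 0 (size x)) x = [seq (i, nth x0 x i) | i <- iota 0 (size x)].
Proof.
apply: (@eq_from_nth _ (0%N, x0)); first by rewrite size_zip size_map size_iota minnn.
move=> i; rewrite size_zip size_iota minnn => hi.
by rewrite nth_zip ?size_iota // (nth_map 0%N) ?size_iota // nth_iota.
Qed.

Section Permutation.
Context {d : Order.disp_t} {X : orderType d}.

Lemma sorter_perm J (x : seq X) :
  uniq J -> all (fun i => (i < size x)%N) J -> perm_eq (sorter J x) x.
Proof.
case: x => [|x0 x'] // uJ aJ; set x := x0 :: x' in aJ *.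
rewrite /sorter (zip_iota_nth x0) filter_map -!map_comp.
set I := iota 0 (size x); set vals := sort _ _.
have split_perm (f : nat -> X) :
    perm_eq (map f I) (map f [seq i <- I | i \in J] ++ map f [seq i <- I | i \notin J]).
  by rewrite -map_cat perm_map // perm_sym (perm_filterC (mem J)).
have JI : perm_eq [seq i <- I | i \in J] J.
  apply: uniq_perm; rewrite ?filter_uniq ?iota_uniq // => i.
  by rewrite mem_filter mem_iota /=; case iJ: (i \in J); rewrite // (allP aJ).
have vals_perm : perm_eq vals (map (nth x0 x) [seq i <- I | i \in J]) by rewrite perm_sort.
have size_vals : size vals = size J.
  by rewrite (perm_size vals_perm) size_map (perm_size JI).
have sort_J : [seq nth x0 vals (index i J) | i <- J] = vals.
  rewrite (map_comp (nth x0 vals) (index^~ J)) -[RHS](mkseq_nth x0) size_vals.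
  congr map; apply: (@eq_from_nth _ 0%N); rewrite size_map ?size_iota // => i hi.
  by rewrite (nth_map 0%N) // index_uniq // nth_iota.
apply: (@perm_trans _ (map (nth x0 x) I)); last by rewrite /I -/(mkseq _ _) mkseq_nth.
apply: perm_trans (split_perm _) _; rewrite perm_sym.
apply: perm_trans (split_perm _) _; rewrite perm_sym.
apply: perm_cat.
  apply: perm_trans (perm_map _ JI) _; rewrite -sort_J in vals_perm.
  apply: etrans vals_perm; congr perm_eq; apply/eq_in_map => i iJ /=.
  by rewrite iJ; apply: set_nth_default; rewrite size_vals index_mem.
apply/permP => a; congr count; apply/eq_in_map => i.
by rewrite mem_filter /= => /andP[/negbTE ->].
Qed.

Lemma rearr_perm p (x : seq X) : perm_eq p (iota 0 (size x)) -> perm_eq (rearr p x) x.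
Proof.
case: x => [|x0 x'] hp; first by move/perm_nilP: hp => ->.
set x := x0 :: x' in hp *.
have p_lt : all (fun i => (i < size x)%N) p.
  by apply/allP => i; rewrite (perm_mem hp) mem_iota.
have -> : rearr p x = map (nth x0 x) p.
  elim: p p_lt {hp} => //= i p IH /andP[hi p_lt].
  by rewrite onthE (nth_map x0) //= IH.
by rewrite -{2}(mkseq_nth x0 x); apply: perm_map.
Qed.

Lemma ceval_perm c (x : seq X) : cnet_on (size x) c -> perm_eq (ceval c x) x.
Proof.
elim: c => [|J c IH|p c IH] //=.
  case/and3P=> uJ aJ /IH h; rewrite -(permPr h).
  by apply: sorter_perm; rewrite ?(perm_size h).
case/andP=> hp /IH h; rewrite -(permPr h).
by apply: rearr_perm; rewrite (perm_size h).
Qed.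

End Permutation.

Section TopSorted.
Context {d : Order.disp_t} {X : orderType d}.
Implicit Types (k : nat) (x y M : seq X).

Lemma top_sortedE k x : top_sorted k x =
  nonincr (take k x) && all (fun a => all (fun b => b <= a) (drop k x)) (take k x).
Proof.
rewrite /top_sorted; case: leqP => // h.
rewrite take_oversize // drop_oversize //.
by case: (nonincr x) => //=; elim: x {h} => //= a x ->.
Qed.

Lemma top_sorted1_cons (a : X) x : top_sorted 1 (a :: x) = all (fun b => b <= a) x.
Proof. by rewrite top_sortedE /= drop0 take0 andbT. Qed.

Lemma top_sorted_take j k y : (j <= k)%N -> top_sorted j y -> top_sorted k (take j y).
Proof.
move=> jk; rewrite top_sortedE => /andP[take_sorted _].
by rewrite /top_sorted size_take; case: ltnP => h; rewrite ifT //; lia.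
Qed.

Lemma top_prefix_count_ge k y (b : X) :
  top_sorted k y -> b \in drop k y -> count (fun c => b <= c) (take k y) = k.
Proof.
rewrite top_sortedE => /andP[_ /allP top] bD.
have ky : (k <= size y)%N.
  have : (0 < size (drop k y))%N by case: (drop k y) bD.
  rewrite size_drop; lia.
have take_ge : all (fun c => b <= c) (take k y).
  by apply/allP => c /top /allP; apply.
by move: take_ge; rewrite all_count size_takel // => /eqP.
Qed.

Lemma top_sorted_count_ge_lt k M (a b : X) : top_sorted k M -> (k <= size M)%N ->
  a \in take k M -> a < b -> (count (fun c => (b <= c)%O) M < k)%N.
Proof.
rewrite top_sortedE => /andP[_ /allP top] kM aT ab.
have drop_none : count (fun c => b <= c) (drop k M) = 0%N.
  apply/eqP; rewrite -leqn0 leqNgt -has_count; apply/hasPn => c /(allP (top a aT)) ca.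
  by rewrite -ltNge (le_lt_trans ca).
have take_lt : (count (fun c => (b <= c)%O) (take k M) < k)%N.
  have : has (predC (fun c => b <= c)) (take k M).
    by apply/hasP; exists a => //=; rewrite -ltNge.
  have := count_predC (fun c => b <= c) (take k M).
  rewrite has_count size_takel //; lia.
by rewrite -(cat_take_drop k M) count_cat drop_none addn0.
Qed.

Lemma top_sorted_cat_drops k (P : seq (nat * seq X)) M :
  {in P, forall p, top_sorted p.1 p.2 /\ ((p.1 < size p.2)%N -> p.1 = k)} ->
  perm_eq M (flatten [seq take p.1 p.2 | p <- P]) -> top_sorted k M -> (k <= size M)%N ->
  top_sorted k (M ++ flatten [seq drop p.1 p.2 | p <- P]).
Proof.
move=> hP hM tM kM; set D := flatten _.
have drop_MD : drop k (M ++ D) = drop k M ++ D.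
  rewrite drop_cat; case: ltnP => // Mk.
  have -> : k = size M by apply/eqP; rewrite eqn_leq kM.
  by rewrite subnn drop0 drop_size.
move: (tM); rewrite !top_sortedE takel_cat // drop_MD => /andP[-> top] /=.
apply/allP => a aT; rewrite all_cat (allP top a aT) /=.
apply/allP => b /flattenP[_ /mapP[p pP ->] bD]; rewrite leNgt; apply/negP => ab.
have [tp pk] := hP p pP.
have {}pk : p.1 = k.
  apply: pk; have : (0 < size (drop p.1 p.2))%N by case: (drop _ _) bD.
  by rewrite size_drop subn_gt0.
rewrite pk in tp bD.
have := top_sorted_count_ge_lt tM kM aT ab; rewrite (permP hM) -(top_prefix_count_ge tp bD).
rewrite ltnNge -pk leq_count_flatten //; exact: map_f.
Qed.

End TopSorted.

Section OddEvenSelection.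
Context {d : Order.disp_t} {X : orderType d}.
Variables (m : nat) (maxnet : nat -> cnet) (merger : nat -> nat -> cnet)
  (splitting : nat -> nat -> seq nat).
Hypothesis maxnet_on : forall n, cnet_on n (maxnet n).
Hypothesis maxnet_head : forall n (x : seq X) (y : X), size x = n -> y \in x ->
  y <= head y (ceval (maxnet n) x).
Hypothesis merger_on : forall s k, cnet_on s (merger s k).
Hypothesis merger_top : forall s k (xs : seq (seq X)), size xs = m ->
  all (top_sorted k) xs -> sumn [seq size xi | xi <- xs] = s ->
  top_sorted k (ceval (merger s k) (flatten xs)).
Hypothesis split_admissible : forall n k, (2 <= k <= n)%N ->
  [/\ size (splitting n k) = m, sorted geq (splitting n k),
      sumn (splitting n k) = n & (head 0 (splitting n k) < n)%N].

Lemma maxnet_top n (x : seq X) : size x = n ->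
  size (ceval (maxnet n) x) = n /\ top_sorted 1 (ceval (maxnet n) x).
Proof.
move=> xn; have perm_x : perm_eq (ceval (maxnet n) x) x by apply: ceval_perm; rewrite xn.
split; first by rewrite (perm_size perm_x).
have max_x := maxnet_head xn.
move: max_x perm_x; case: (ceval (maxnet n) x) => [|a y] max_a perm_x.
  by rewrite /top_sorted.
rewrite top_sorted1_cons; apply/allP => b yb; apply: max_a.
by rewrite -(perm_mem perm_x) inE yb orbT.
Qed.

Definition merge_blocks k (ks : seq nat) (ys : seq (seq X)) : seq X :=
  ceval (merger (sumn ks) k) (flatten [seq take p.1 p.2 | p <- zip ks ys])
    ++ flatten [seq drop p.1 p.2 | p <- zip ks ys].

Lemma merge_blocks_top k ks ys : size ks = m -> size ys = m -> (k <= sumn ks)%N ->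
  {in zip ks ys, forall p, p.1 = minn k (size p.2) /\ top_sorted p.1 p.2} ->
  size (merge_blocks k ks ys) = sumn (map size ys) /\ top_sorted k (merge_blocks k ks ys).
Proof.
move=> ksm ysm k_sum blocks.
set P := zip ks ys; set L := flatten [seq take p.1 p.2 | p <- P].
have P_le : {in P, forall p, p.1 <= size p.2}%N.
  by move=> p /blocks[-> _]; apply: geq_minr.
have size_L : size L = sumn ks.
  by rewrite size_flatten_take //; congr sumn; apply: unzip1_zip; rewrite ksm ysm.
have perm_L : perm_eq (ceval (merger (sumn ks) k) L) L.
  by apply: ceval_perm; rewrite size_L.
split.
  rewrite size_cat (perm_size perm_L) size_flatten_take_drop.
  by rewrite (map_comp size snd); congr (sumn (map _ _)); apply: unzip2_zip; rewrite ksm ysm.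
apply: top_sorted_cat_drops => //.
- by move=> p /blocks[p1 tp]; split=> //; rewrite p1; lia.
- apply: merger_top => //.
  + by rewrite size_map size_zip ksm ysm minnn.
  + apply/allP => _ /mapP[p /blocks[p1 tp] ->]; apply: top_sorted_take tp.
    by rewrite p1 geq_minl.
  + by rewrite -size_L size_flatten.
- by rewrite (perm_size perm_L) size_L.
Qed.

Definition select_block fuel k (p : nat * seq X) : seq X :=
  if minn k p.1 == 0%N then p.2
  else oe_sel_rec maxnet merger splitting fuel p.1 (minn k p.1) p.2.

Lemma oe_sel_recS fuel n k (x : seq X) : (1 < k)%N ->
  oe_sel_rec maxnet merger splitting fuel.+1 n k x =
  merge_blocks k (map (minn k) (splitting n k))
    (map (select_block fuel k) (zip (splitting n k) (reshape (splitting n k) x))).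
Proof. by move=> k_gt1; rewrite /= leqNgt k_gt1. Qed.

Lemma oe_sel_rec_top fuel n k (x : seq X) :
  (n < fuel)%N -> (1 <= k <= n)%N -> size x = n ->
  size (oe_sel_rec maxnet merger splitting fuel n k x) = n /\
  top_sorted k (oe_sel_rec maxnet merger splitting fuel n k x).
Proof.
elim: fuel => // fuel IH in n k x *; move=> n_lt kn xn.
have [k_le1 | k_gt1] := leqP k 1.
  have -> : k = 1%N by lia.
  exact: maxnet_top.
have [size_ns sorted_ns sum_ns head_ns] := split_admissible (n := n) (k := k) ltac:(lia).
rewrite oe_sel_recS //; set ns := splitting n k in size_ns sorted_ns sum_ns head_ns *.
set Z := zip ns (reshape ns x).
have unzip1_Z : map fst Z = ns by apply: unzip1_zip; rewrite size_reshape.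
have Z_blocks q : q \in Z -> size q.2 = q.1 /\ (q.1 < n)%N.
  move=> qZ; split; first by apply: zip_reshape_size qZ; rewrite sum_ns xn.
  have q_ns : q.1 \in ns by rewrite -unzip1_Z map_f.
  exact: leq_ltn_trans (leq_head_sorted sorted_ns q_ns) head_ns.
have Z_select q : q \in Z ->
    size (select_block fuel k q) = q.1 /\ top_sorted (minn k q.1) (select_block fuel k q).
  case: q => [a y] /Z_blocks /= [size_y a_lt]; rewrite /select_block /=.
  have [k0 | k_pos] := posnP (minn k a); last by apply: IH => //; lia.
  have a0 : a = 0%N by lia.
  have -> : y = [::] by apply/size0nil; rewrite size_y.
  by rewrite k0 a0.
have ks_Z : map (minn k) ns = map (fun q => minn k q.1) Z by rewrite -unzip1_Z -map_comp.
have size_ks : size (map (minn k) ns) = m by rewrite size_map.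
have size_ys : size (map (select_block fuel k) Z) = m.
  by rewrite size_map size_zip size_reshape minnn.
have k_le_sum : (k <= sumn (map (minn k) ns))%N.
  by have := leq_minn_sumn k ns; rewrite sum_ns (minn_idPl _) //; lia.
have blocks_top : {in zip (map (minn k) ns) (map (select_block fuel k) Z),
    forall p, p.1 = minn k (size p.2) /\ top_sorted p.1 p.2}.
  rewrite ks_Z zip_map => _ /mapP[q qZ ->] /=.
  by have [-> ->] := Z_select q qZ.
have [size_out top_out] := merge_blocks_top size_ks size_ys k_le_sum blocks_top.
split=> //; rewrite size_out -map_comp -sum_ns -unzip1_Z.
by congr sumn; apply/eq_in_map => q /Z_select[].
Qed.

End OddEvenSelection.

Theorem mainTheorem4 (d : Order.disp_t) (X : orderType d) (m : nat)
    (maxnet : nat -> cnet) (merger : nat -> nat -> cnet)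
    (split : nat -> nat -> seq nat) :
  (2 <= m)%N ->
  (forall n, cnet_on n (maxnet n)) ->
  (forall n (x : seq X) (y : X), size x = n -> y \in x ->
     y <= head y (ceval (maxnet n) x)) ->
  (forall s k, cnet_on s (merger s k)) ->
  (forall s k (xs : seq (seq X)), size xs = m -> all (top_sorted k) xs ->
     sumn [seq size xi | xi <- xs] = s ->
     top_sorted k (ceval (merger s k) (flatten xs))) ->
  (forall n k, (2 <= k <= n)%N ->
     [/\ size (split n k) = m, sorted geq (split n k),
         sumn (split n k) = n & (head 0 (split n k) < n)%N]) ->
  forall n k, (1 <= k <= n)%N ->
  forall x : seq X, size x = n ->
    top_sorted k (oe_sel maxnet merger split n k x).
Proof.
move=> _ maxnet_on maxnet_head merger_on merger_top split_admissible n k kn x xn.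
by have [] := oe_sel_rec_top maxnet_on maxnet_head merger_on merger_top split_admissible
  (ltnSn n) kn xn.
Qed.
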